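(* Let $F$ and $H$ be graphs such that $F$ is a subgraph of a blow-up of $H$, and let $r\ge |V(F)|$. Then $\widehat{\mathrm{ex}}_r(n,H,\text{Berge-}F)=o(n^{|V(H)|})$ as $n\to\infty$.
   Context: A blow-up of $H$ is obtained by replacing each vertex of $H$ by an independent set and each edge by a complete bipartite graph between the corresponding sets. A hypergraph $\mathcal{H}$ is a Berge copy of a graph $G$ if $V(G)\subseteq V(\mathcal{H})$ and there is a bijection $f:E(G)\to E(\mathcal{H})$ with $e\subseteq f(e)$ for all $e$; Berge-$F$-free means containing no Berge copy of $F$. The shadow graph of $\mathcal{H}$ is the graph on $V(\mathcal{H})$ where $uv$ is an edge iff some hyperedge contains $u$ and $v$. $\widehat{\mathrm{ex}}_r(n,H,\text{Berge-}F)$ is the maximum number of copies of $H$ in the shadow graph of an $r$-uniform Berge-$F$-free $n$-vertex hypergraph. *)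

From mathcomp Require Import all_boot all_order all_algebra.
Set Implicit Arguments. Unset Strict Implicit. Unset Printing Implicit Defensive.
Import Order.TTheory GRing.Theory Num.Theory.

Definition simple_graph (V : finType) (adj : rel V) : Prop :=
  symmetric adj /\ irreflexive adj.

Definition edges (V : finType) (adj : rel V) : {set {set V}} :=
  [set e : {set V} | [exists u, exists v, adj u v && (e == [set u; v])]].

(* Blow-up of H with part sizes t : each vertex v is replaced by an
   independent set of size t v (vertices (v, i), i < t v) and each edge
   by a complete bipartite graph. *)
Definition blowup_vertex (VH : finType) (t : VH -> nat) : finType :=
  {v : VH & 'I_(t v)}.

Definition blowup_adj (VH : finType) (Hadj : rel VH) (t : VH -> nat)
  : rel (blowup_vertex t) :=
  fun x y => Hadj (tag x) (tag y).

Definition subgraph_of (VF W : finType) (Fadj : rel VF) (Gadj : rel W) : Prop :=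
  exists phi : VF -> W, injective phi /\
    forall u v, Fadj u v -> Gadj (phi u) (phi v).

Definition subgraph_of_blowup (VF VH : finType) (Fadj : rel VF) (Hadj : rel VH)
  : Prop :=
  exists t : VH -> nat, @subgraph_of VF (blowup_vertex t) Fadj (@blowup_adj VH Hadj t).

Definition uniform (n r : nat) (E : {set {set 'I_n}}) : bool :=
  [forall e in E, #|e| == r].

Definition has_berge_copy (VF : finType) (Fadj : rel VF) (n : nat)
  (E : {set {set 'I_n}}) : bool :=
  [exists g : {ffun VF -> 'I_n}, exists f : {ffun {set VF} -> {set 'I_n}},
    [&& injectiveb g,
        [forall e1 in edges Fadj, forall e2 in edges Fadj,
           (f e1 == f e2) ==> (e1 == e2)] &
        [forall e in edges Fadj, (f e \in E) && (g @: e \subset f e)]]].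

Definition berge_free (VF : finType) (Fadj : rel VF) (n : nat)
  (E : {set {set 'I_n}}) : bool := ~~ has_berge_copy Fadj E.

Definition shadow (n : nat) (E : {set {set 'I_n}}) : rel 'I_n :=
  fun x y => (x != y) && [exists e in E, (x \in e) && (y \in e)].

(* Copies of H in a graph G on 'I_n: subgraphs (vertex set, edge set)
   that are images of an injective homomorphism of H into G. *)
Definition copy_of (VH : finType) (Hadj : rel VH) (n : nat)
  (phi : {ffun VH -> 'I_n}) : {set 'I_n} * {set {set 'I_n}} :=
  (phi @: [set: VH], [set phi @: e | e : {set VH} in edges Hadj]).

Definition num_copies (VH : finType) (Hadj : rel VH) (n : nat)
  (Gadj : rel 'I_n) : nat :=
  #|[set copy_of Hadj phi | phi in
      [pred phi : {ffun VH -> 'I_n} | injectiveb phi &&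
         [forall u, forall v, Hadj u v ==> Gadj (phi u) (phi v)]]]|.

Definition ex_hat (r n : nat) (VH : finType) (Hadj : rel VH)
  (VF : finType) (Fadj : rel VF) : nat :=
  \max_(E : {set {set 'I_n}} | uniform r E && berge_free Fadj E)
     num_copies Hadj (shadow E).

From mathcomp Require Import all_boot all_order all_algebra.
From mathcomp Require Import zify lra.
Import Order.TTheory GRing.Theory Num.Theory.

Set Implicit Arguments. Unset Strict Implicit. Unset Printing Implicit Defensive.

(* Suppose the shadow of an r-uniform hypergraph E contains at least n^|V(H)|/q
   homomorphic copies of H. Erdős' box theorem (iterated Kővári–Sós–Turán
   double counting, with the power-mean inequality) yields, for any fixed T,
   sets A_a of size at least T, one per vertex a of H, such that every choice
   of one vertex in each A_a is a homomorphic copy of H; hence A_a and A_b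
   are completely joined in the shadow whenever ab is an edge of H. Send each vertex u of F to the
   part A_(p u), where p : F -> H comes from the blow-up, avoiding for every
   set S of vertices of F the images of S and one fixed hyperedge covering
   them. A union bound shows such a choice exists once T is large, and it
   gives distinct vertices and distinct covering hyperedges for the edges of
   F, i.e. a Berge copy of F. *)

Lemma card_bigcup_le (I T : finType) (F : I -> {set T}) :
  #|\bigcup_i F i| <= \sum_i #|F i|.
Proof.
elim/big_rec2: _ => [|i m U _ leUm]; first by rewrite cards0.
by rewrite (leq_trans (leq_card_setU _ _).1) ?leq_add2l.
Qed.

Lemma mul_expn_pair_le (a b k : nat) : a * b ^ k + b * a ^ k <= a ^ k.+1 + b ^ k.+1.
Proof.
wlog ab : a b / a <= b.
  by move=> wlog_ab; case: (leqP a b) => [/wlog_ab //|/ltnW/wlog_ab]; lia.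
have : a ^ k <= b ^ k by elim: k => // k IHk; rewrite !expnS leq_mul.
rewrite !expnS; move: (a ^ k) (b ^ k) => u v; nia.
Qed.

Lemma chebyshev_expn_sum (G : finType) (d : G -> nat) (k : nat) :
  (\sum_g d g) * (\sum_g d g ^ k) <= #|G| * \sum_g d g ^ k.+1.
Proof.
rewrite -(leq_pmul2l (isT : 0 < 2)) big_distrl /=.
under eq_bigr => i _ do rewrite big_distrr /=.
have -> : 2 * \sum_i \sum_j d i * d j ^ k =
          \sum_i \sum_j (d i * d j ^ k + d j * d i ^ k).
  rewrite mul2n -addnn {2}exchange_big -big_split /=.
  by apply: eq_bigr => i _; rewrite big_split.
apply: (@leq_trans (\sum_i \sum_j (d i ^ k.+1 + d j ^ k.+1))).
  by apply: leq_sum => i _; apply: leq_sum => j _; apply: mul_expn_pair_le.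
rewrite (eq_bigr (fun i => #|G| * d i ^ k.+1 + \sum_j d j ^ k.+1)); last first.
  by move=> i _; rewrite big_split /= sum_nat_const.
rewrite big_split /= sum_nat_const -big_distrr /= cardE; lia.
Qed.

Lemma power_mean_sum (G : finType) (d : G -> nat) (k : nat) :
  (\sum_g d g) ^ k.+1 <= #|G| ^ k * \sum_g d g ^ k.+1.
Proof.
elim: k => [|k IHk]; first by rewrite mul1n; apply: leq_sum => g _.
rewrite expnS (leq_trans (leq_mul (leqnn _) IHk)) //.
by rewrite mulnCA expnSr -mulnA leq_mul2l chebyshev_expn_sum orbT.
Qed.

Section Box.
Variables (I Y : finType).

Definition box (B : I -> {set Y}) : {set {ffun I -> Y}} := [set f in family B].

Lemma boxP (B : I -> {set Y}) (f : {ffun I -> Y}) :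
  reflect (forall i, f i \in B i) (f \in box B).
Proof. by rewrite inE; apply: familyP. Qed.

Lemma boxT : box (fun=> setT) = setT.
Proof. by apply/setP => f; rewrite !inE; apply/familyP => i; rewrite inE. Qed.

Definition update (f : {ffun I -> Y}) (w : I) (y : Y) : {ffun I -> Y} :=
  [ffun i => if i == w then y else f i].

(* Resampling coordinate [w] leaves [X f] unchanged, so (f, y) |-> (f with
   f w := y, f w) injects the pairs on the left into the pairs (g, x) with
   g in the box and x in X g. *)
Lemma card_box_hit_le (B : I -> {set Y}) (w : I) (X : {ffun I -> Y} -> {set Y})
    (c : nat) :
    (forall f g : {ffun I -> Y}, (forall i, i != w -> f i = g i) -> X f = X g) ->
    (forall f, #|X f| <= c) ->
  #|[set f in box B | f w \in X f]| * #|B w| <= c * #|box B|.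
Proof.
move=> X_local X_small; rewrite -cardsX.
pose swap p := (update p.1 w p.2, p.1 w).
have X_update f y : X (update f w y) = X f.
  by apply: X_local => i /negbTE niw; rewrite ffunE niw.
have swap_inj : injective swap.
  move=> [f y] [g z] [/ffunP efg fg_w]; have := efg w; rewrite !ffunE eqxx /= => yz.
  congr pair => //; apply/ffunP => i; have := efg i; rewrite !ffunE.
  by case: eqP => [->|].
rewrite -(card_imset _ swap_inj).
pose P := [set p : {ffun I -> Y} * Y | (p.1 \in box B) && (p.2 \in X p.1)].
have /subset_leq_card/leq_trans-> // :
    swap @: setX [set f in box B | f w \in X f] (B w) \subset P.
  apply/subsetP => _ /imsetP[[f y] /setXP[fhit yB] ->].
  move: fhit; rewrite inE => /andP[/boxP fB fX].
  rewrite inE /= X_update fX andbT; apply/boxP => i; rewrite ffunE.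
  by case: eqP => [->|]; [exact: yB | rewrite fB].
rewrite -sum1_card (eq_bigl _ _ (fun p => in_set _ p)) /=.
rewrite -(pair_big_dep (mem (box B)) (fun f y => y \in X f) (fun _ _ => 1)) /=.
rewrite mulnC -sum_nat_const; apply: leq_sum => f _; rewrite sum1_card; exact: X_small.
Qed.

Lemma card_noninjective_le :
  #|[set f : {ffun I -> Y} | ~~ injectiveb f]| * #|Y| <= #|I| ^ 2 * #|Y| ^ #|I|.
Proof.
pose X (p : I * I) (f : {ffun I -> Y}) : {set Y} :=
  if p.1 == p.2 then set0 else [set f p.1].
pose hit p := [set f in box (fun=> setT) | f p.2 \in X p f].
have ninj_hit : [set f : {ffun I -> Y} | ~~ injectiveb f] \subset \bigcup_p hit p.
  apply/subsetP => f /[!inE] /injectiveP f_ninj; apply/bigcupP.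
  case: (boolP [exists x, exists y, (f x == f y) && (x != y)]).
    case/existsP => x /existsP[y /andP[fxy nxy]]; exists (x, y) => //.
    by rewrite inE boxT inE /X /= (negbTE nxy) inE eq_sym.
  move/existsPn => f_inj; case: f_ninj => x y fxy; apply/eqP.
  apply: contraNT (f_inj x) => nxy; apply/existsP; exists y.
  by rewrite fxy eqxx.
apply: leq_trans (leq_mul (subset_leq_card ninj_hit) (leqnn _)) _.
apply: leq_trans (leq_mul (card_bigcup_le _) (leqnn _)) _.
rewrite big_distrl /=.
apply: (@leq_trans (\sum_(p : I * I) #|Y| ^ #|I|)); last first.
  by rewrite sum_nat_const cardT -cardE card_prod.
apply: leq_sum => p _.
have := @card_box_hit_le (fun=> setT) p.2 (X p) 1.
rewrite /hit boxT !cardsT card_ffun mul1n; apply.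
- by move=> f g fg; rewrite /X; case: eqP => // /eqP np; rewrite fg.
- by move=> f; rewrite /X; case: eqP => _; rewrite ?cards0 ?cards1.
Qed.

End Box.

Definition dense_forces_box (I : finType) (T q : nat) : Prop :=
  exists N, forall n, N <= n -> forall S : {set {ffun I -> 'I_n}},
    n ^ #|I| <= q * #|S| ->
    exists2 A : I -> {set 'I_n}, (forall i, T <= #|A i|) & box A \subset S.

Lemma dense_forces_box0 (I : finType) (T q : nat) : #|I| = 0 -> dense_forces_box I T q.
Proof.
move=> I0; exists T => n leTn S; rewrite I0 expn0 => S_dense.
have [f0 Sf0] : exists f0, f0 \in S.
  by apply/card_gt0P; move: S_dense; case: #|S| => //; rewrite muln0.
exists (fun=> setT) => [i|]; first by rewrite cardsT card_ord.
apply/subsetP => f _; suff -> : f = f0 by [].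
by apply/ffunP => i; have := card0_eq I0 i; rewrite inE.
Qed.

Section Slices.
Variables (I : finType) (i0 : I) (Y : finType) (S : {set {ffun I -> Y}}).
Let J := {i : I | i != i0}.

Lemma card_sub_pt : #|I| = #|{: J}|.+1.
Proof.
rewrite card_sig.
have -> : #|[pred i | i != i0]| = #|predC1 i0| by apply: eq_card.
rewrite cardC1.
by apply/esym/prednK/card_gt0P; exists i0.
Qed.

Definition join (g : {ffun J -> Y}) (y : Y) : {ffun I -> Y} :=
  [ffun i => if insub i is Some j then g j else y].

Definition restrict (f : {ffun I -> Y}) : {ffun J -> Y} := [ffun j => f (val j)].

Lemma join_pt g y : join g y i0 = y.
Proof. by rewrite ffunE insubN // negbK. Qed.

Lemma join_val g y j : join g y (val j) = g j.
Proof. by rewrite ffunE valK. Qed.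

Lemma restrictK f : join (restrict f) (f i0) = f.
Proof.
apply/ffunP => i; rewrite ffunE; case: insubP => [j _ <-|]; first by rewrite ffunE.
by rewrite negbK => /eqP ->.
Qed.

Lemma restrict_join g y : restrict (join g y) = g.
Proof. by apply/ffunP => j; rewrite ffunE join_val. Qed.

Definition fiber (g : {ffun J -> Y}) : {set Y} := [set y | join g y \in S].

Definition slice (k : nat) (b : {ffun 'I_k -> Y}) : {set {ffun J -> Y}} :=
  [set g | [forall t, join g (b t) \in S]].

Lemma sum_card_fiber : \sum_g #|fiber g| = #|S|.
Proof.
pose P := [set p : {ffun J -> Y} * Y | join p.1 p.2 \in S].
have join_inj : injective (fun p : {ffun J -> Y} * Y => join p.1 p.2).
  move=> [g y] [g' y'] /= eq_join; congr pair.
  - by rewrite -(restrict_join g y) eq_join restrict_join.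
  - by rewrite -(join_pt g y) eq_join join_pt.
have -> : S = [set join p.1 p.2 | p in P].
  apply/setP => f; apply/idP/imsetP => [Sf|[p Pp ->]]; last by move: Pp; rewrite inE.
  by exists (restrict f, f i0); rewrite ?inE /= restrictK.
rewrite (card_imset _ join_inj) -sum1_card (eq_bigl _ _ (fun p => in_set _ p)) /=.
rewrite -(pair_big_dep predT (fun g y => join g y \in S) (fun _ _ => 1)) /=.
by apply: eq_bigr => g _; rewrite -sum1_card; apply: eq_bigl => y; rewrite inE.
Qed.

Lemma sum_card_slice k : \sum_(b : {ffun 'I_k -> Y}) #|slice b| = \sum_g #|fiber g| ^ k.
Proof.
under [LHS]eq_bigr => b _ do rewrite -sum1_card big_mkcond /=.
rewrite exchange_big /=; apply: eq_bigr => g _.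
rewrite -[k in _ ^ k]card_ord -card_ffun_on -sum1_card [RHS]big_mkcond /=.
apply: eq_bigr => b _; congr (if _ then _ else _); rewrite inE.
by apply/forallP/ffun_onP => Sb t; have := Sb t; rewrite inE.
Qed.

Lemma sum_card_slice_ge q k : #|Y| ^ #|I| <= q * #|S| ->
  #|Y| ^ (#|{: J}| + k.+1) <= q ^ k.+1 * \sum_(b : {ffun 'I_k.+1 -> Y}) #|slice b|.
Proof.
rewrite card_sub_pt; set h := #|{: J}|; set n := #|Y| => S_dense.
have [->|n_gt0] := posnP n; first by rewrite exp0n ?addnS.
have power_mean := power_mean_sum (fun g : {ffun J -> Y} => #|fiber g|) k.
rewrite sum_card_fiber card_ffun -sum_card_slice in power_mean.
have dense_pow : (n ^ h.+1) ^ k.+1 <= q ^ k.+1 * #|S| ^ k.+1 by rewrite -expnMn leq_exp2r.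
have split_pow : (n ^ h.+1) ^ k.+1 = (n ^ h) ^ k * n ^ (h + k.+1).
  by rewrite -!expnM -expnD; congr (_ ^ _); lia.
rewrite -(@leq_pmul2l ((n ^ h) ^ k)) ?expn_gt0 ?n_gt0 // -split_pow mulnCA.
by apply: (leq_trans dense_pow); rewrite leq_mul2l power_mean orbT.
Qed.

Lemma sum_card_noninjective_slice_le k :
  #|Y| * \sum_(b : {ffun 'I_k -> Y} | ~~ injectiveb b) #|slice b|
    <= k ^ 2 * #|Y| ^ (k + #|{: J}|).
Proof.
have := card_noninjective_le 'I_k Y; rewrite card_ord => noninj.
apply: (@leq_trans
  (#|Y| * (#|[set b : {ffun 'I_k -> Y} | ~~ injectiveb b]| * #|Y| ^ #|{: J}|))).
  rewrite leq_mul2l -card_ffun cardsE -sum_nat_const; apply/orP; right.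
  by apply: leq_sum => b _; apply: max_card.
by rewrite mulnA [#|Y| * _]mulnC expnD mulnA leq_mul2r noninj orbT.
Qed.

Lemma exists_dense_injective_slice q k :
    #|Y| ^ #|I| <= q * #|S| -> 2 * q ^ k.+1 * k.+1 ^ 2 < #|Y| ->
  exists2 b : {ffun 'I_k.+1 -> Y},
    injectiveb b & #|Y| ^ #|{: J}| <= 2 * q ^ k.+1 * #|slice b|.
Proof.
set h := #|{: J}|; set n := #|Y|; set R := q ^ k.+1 => S_dense n_large.
pose inj (b : {ffun 'I_k.+1 -> Y}) := injectiveb b.
case: (boolP [exists b, inj b && (n ^ h <= 2 * R * #|slice b|)]).
  by case/existsP => b /andP[]; exists b.
move/existsPn => sparse; exfalso.
have := sum_card_slice_ge k S_dense; rewrite (bigID inj) /= -/R.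
set Yi := \sum_(b : {ffun 'I_k.+1 -> Y} | injectiveb b) _.
set Zn := \sum_(b : {ffun 'I_k.+1 -> Y} | ~~ injectiveb b) _ => sum_ge.
have := sum_card_noninjective_slice_le k.+1; rewrite -/Zn => noninj.
have inj_le : 2 * R * Yi <= n ^ k.+1 * n ^ h.
  rewrite /Yi big_distrr /=; apply: (@leq_trans (\sum_(b : {ffun 'I_k.+1 -> Y}) n ^ h)).
    rewrite [X in _ <= X](bigID inj) /=.
    apply: leq_trans (leq_addr _ _); apply: leq_sum => b b_inj.
    by have := sparse b; rewrite /inj b_inj /= -ltnNge => /ltnW.
  by rewrite sum_nat_const card_ffun card_ord.
have n_gt0 : 0 < n by apply: leq_ltn_trans n_large.
(* With P = n^h and Q = n^(k+1): 2PQ <= 2R(Yi + Zn) <= PQ + 2R Zn, hence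
   n PQ <= 2R n Zn <= 2R (k+1)^2 PQ < n PQ. *)
rewrite -/n -/h !expnD in sum_ge noninj.
have PQ_gt0 : 0 < n ^ h * n ^ k.+1 by rewrite muln_gt0 !expn_gt0 n_gt0.
move: (n ^ h) (n ^ k.+1) PQ_gt0 sum_ge noninj inj_le => P Q; nia.
Qed.

Definition extend (AJ : J -> {set Y}) (A0 : {set Y}) (i : I) : {set Y} :=
  if insub i is Some j then AJ j else A0.

Lemma box_extend_sub k (b : {ffun 'I_k -> Y}) (AJ : J -> {set Y}) :
  box AJ \subset slice b -> box (extend AJ [set b t | t in 'I_k]) \subset S.
Proof.
move=> /subsetP AJ_sub; apply/subsetP => f /boxP f_box.
have /AJ_sub : restrict f \in box AJ.
  by apply/boxP => j; rewrite ffunE; have := f_box (val j); rewrite /extend valK.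
have := f_box i0; rewrite /extend insubN ?negbK // => /imsetP[t _ ft].
by rewrite inE => /forallP/(_ t); rewrite -ft restrictK.
Qed.

End Slices.

Lemma dense_forces_boxS (I : finType) (i0 : I) (k : nat) :
    (forall q, dense_forces_box {: {i : I | i != i0}} k.+1 q) ->
  forall q, dense_forces_box I k.+1 q.
Proof.
move=> IH q; have [N HN] := IH (2 * q ^ k.+1).
exists (N + 2 * q ^ k.+1 * k.+1 ^ 2).+1 => n le_n S S_dense.
rewrite -[n in n ^ _]card_ord in S_dense.
have n_large : 2 * q ^ k.+1 * k.+1 ^ 2 < #|'I_n|.
  by rewrite card_ord; apply: leq_trans le_n; rewrite ltnS leq_addl.
have [b b_inj b_dense] := exists_dense_injective_slice i0 S_dense n_large.
rewrite card_ord in b_dense.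
have [AJ AJ_large AJ_sub] := HN n (leq_trans (leq_addr _ _) (ltnW le_n)) _ b_dense.
exists (extend AJ [set b t | t in 'I_k.+1]); last exact: box_extend_sub.
move=> i; rewrite /extend; case: insubP => [j _ _|_]; first exact: AJ_large.
by rewrite card_imset ?card_ord //; apply/injectiveP.
Qed.

Theorem erdos_box (I : finType) (T q : nat) : dense_forces_box I T q.
Proof.
suff box_succ h (J : finType) : #|J| = h -> forall q, dense_forces_box J T.+1 q.
  have [N HN] := box_succ _ I erefl q; exists N => n le_Nn S S_dense.
  have [A A_large A_sub] := HN n le_Nn S S_dense.
  by exists A => // i; apply: ltnW.
elim: h J => [|h IHh] J card_J p; first exact: dense_forces_box0.
have [i0 _] : exists i0, i0 \in J by apply/card_gt0P; rewrite card_J.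
move: p; apply: (dense_forces_boxS (i0 := i0)) => p; apply: IHh.
by have := card_sub_pt i0; rewrite card_J => -[].
Qed.

Section BergeCopy.
Variables (n r : nat) (E : {set {set 'I_n}}) (VF : finType) (Fadj : rel VF).
Hypothesis E_uniform : uniform r E.

Definition covering_edge (S : {set 'I_n}) : {set 'I_n} :=
  odflt set0 [pick e in E | S \subset e].

Lemma card_covering_edge (S : {set 'I_n}) : #|covering_edge S| <= r.
Proof.
rewrite /covering_edge; case: pickP => [e /andP[Ee _]|_] /=; last by rewrite cards0.
by rewrite (eqP (forall_inP E_uniform e Ee)).
Qed.

Lemma covering_edgeP (S e : {set 'I_n}) :
  e \in E -> S \subset e -> covering_edge S \in E /\ S \subset covering_edge S.
Proof.
move=> Ee Se; rewrite /covering_edge; case: pickP => [e' /andP[-> ->] //|/(_ e)] /=.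
by rewrite Ee Se.
Qed.

(* Avoiding every collision makes [phi] injective (take S a singleton) and
   separates the covering hyperedges of distinct edges of F (take w in one
   edge but not in the other). *)
Definition collision (phi : {ffun VF -> 'I_n}) (p : {set VF} * VF) : {set 'I_n} :=
  if p.2 \in p.1 then set0 else phi @: p.1 :|: covering_edge (phi @: p.1).

Lemma berge_copy_of_collision_free (phi : {ffun VF -> 'I_n}) :
    (forall p, phi p.2 \notin collision phi p) ->
    (forall u v, Fadj u v -> shadow E (phi u) (phi v)) ->
  has_berge_copy Fadj E.
Proof.
move=> no_collision phi_hom.
have cover_edge e : e \in edges Fadj ->
    covering_edge (phi @: e) \in E /\ phi @: e \subset covering_edge (phi @: e).
  rewrite inE => /existsP[u /existsP[v /andP[Fuv /eqP->]]].
  have /andP[_ /exists_inP[e' Ee' /andP[ue' ve']]] := phi_hom u v Fuv.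
  apply: (covering_edgeP Ee'); apply/subsetP => _ /imsetP[x + ->].
  by rewrite !inE => /orP[] /eqP->.
have edge_separated (e1 e2 : {set VF}) w :
    e2 \in edges Fadj -> w \in e2 -> w \notin e1 ->
    covering_edge (phi @: e1) != covering_edge (phi @: e2).
  move=> e2F we2 we1; apply/eqP => same_cover; have := no_collision (e1, w).
  rewrite /collision /= (negbTE we1) inE same_cover negb_or => /andP[_].
  by have [_ /subsetP->] := cover_edge e2 e2F; rewrite ?imset_f.
apply/existsP; exists phi; apply/existsP.
exists [ffun e : {set VF} => covering_edge (phi @: e)]; apply/and3P; split.
- apply/injectiveP => u w phi_uw; apply/eqP; apply: contraT => nuw.
  have := no_collision ([set u], w).
  by rewrite /collision /= inE eq_sym (negbTE nuw) imset_set1 !inE phi_uw eqxx.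
- apply/forall_inP => e1 e1F; apply/forall_inP => e2 e2F; apply/implyP.
  rewrite !ffunE; apply: contraLR; rewrite [e1 == e2]eqEsubset negb_and.
  case/orP => /subsetPn[w w_in w_out].
  + by rewrite eq_sym; apply: (edge_separated _ _ w).
  + exact: (edge_separated _ _ w).
- by apply/forall_inP => e eF; rewrite ffunE; have [-> ->] := cover_edge e eF.
Qed.

Lemma exists_collision_free_in_box (B : VF -> {set 'I_n}) (T : nat) :
    #|{: {set VF} * VF}| * (#|VF| + r) < T -> (forall u, T <= #|B u|) ->
  exists2 phi, phi \in box B & forall p, phi p.2 \notin collision phi p.
Proof.
move=> T_large B_large.
pose hit p := [set phi in box B | phi p.2 \in collision phi p].
have card_hit p : #|hit p| * T <= (#|VF| + r) * #|box B|.
  apply: (@leq_trans (#|hit p| * #|B p.2|)); first by rewrite leq_mul2l B_large orbT.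
  apply: card_box_hit_le.
  - move=> f g fg; rewrite /collision; case: ifP => // p2_out.
    suff -> : f @: p.1 = g @: p.1 by [].
    by apply: eq_in_imset => x xp1; apply: fg; apply: contraFneq p2_out => <-.
  - move=> f; rewrite /collision; case: ifP => _; first by rewrite cards0.
    apply: leq_trans (leq_card_setU _ _).1 _; apply: leq_add (card_covering_edge _).
    exact: leq_trans (leq_imset_card _ _) (max_card _).
have box_gt0 : 0 < #|box B|.
  have B_pt u : exists x, x \in B u by apply/card_gt0P; apply: leq_trans (B_large u); lia.
  apply/card_gt0P; exists [ffun u => xchoose (B_pt u)]; apply/boxP => u.
  by rewrite ffunE; apply: xchooseP.
have /subsetPn[phi phiB phi_good] : ~~ (box B \subset \bigcup_p hit p).
  apply/negP => /subset_leq_card box_hit.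
  have : #|box B| * T <= #|{: {set VF} * VF}| * (#|VF| + r) * #|box B|.
    apply: leq_trans (leq_mul box_hit (leqnn T)) _.
    apply: leq_trans (leq_mul (card_bigcup_le _) (leqnn T)) _.
    rewrite big_distrl /=.
    apply: (@leq_trans (\sum_(p : {set VF} * VF) (#|VF| + r) * #|box B|)).
      by apply: leq_sum => p _; apply: card_hit.
    by rewrite sum_nat_const cardT -cardE mulnA.
  by rewrite [X in _ <= X]mulnC leq_pmul2l // leqNgt T_large.
exists phi => // p; apply: contra phi_good => phi_hit.
by apply/bigcupP; exists p; rewrite // inE phiB.
Qed.

Lemma berge_copy_of_complete_box (B : VF -> {set 'I_n}) (T : nat) :
    #|{: {set VF} * VF}| * (#|VF| + r) < T -> (forall u, T <= #|B u|) ->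
    (forall u v x y, Fadj u v -> x \in B u -> y \in B v -> shadow E x y) ->
  has_berge_copy Fadj E.
Proof.
move=> T_large B_large B_complete.
have [phi /boxP phiB phi_free] := exists_collision_free_in_box T_large B_large.
apply: (berge_copy_of_collision_free phi_free) => u v Fuv.
exact: B_complete Fuv (phiB u) (phiB v).
Qed.

End BergeCopy.

Definition homs (VH Y : finType) (Hadj : rel VH) (G : rel Y) : {set {ffun VH -> Y}} :=
  [set phi : {ffun VH -> Y} | [forall u, forall v, Hadj u v ==> G (phi u) (phi v)]].

Lemma num_copies_le_homs (VH : finType) (Hadj : rel VH) (n : nat) (G : rel 'I_n) :
  num_copies Hadj G <= #|homs Hadj G|.
Proof.
apply: leq_trans (leq_imset_card _ _) _; apply: subset_leq_card.
by apply/subsetP => phi /andP[_ phi_hom]; rewrite inE.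
Qed.

Lemma box_homs_complete (VH Y : finType) (Hadj : rel VH) (G : rel Y)
    (A : VH -> {set Y}) (a b : VH) (x y : Y) :
    irreflexive Hadj -> (forall c, 0 < #|A c|) -> box A \subset homs Hadj G ->
  Hadj a b -> x \in A a -> y \in A b -> G x y.
Proof.
move=> Hirr A_gt0 /subsetP A_homs Hab xA yB.
have A_pt c : exists z, z \in A c by apply/card_gt0P.
have neq_ab : a != b by apply: contraTneq Hab => ->; rewrite Hirr.
pose f := [ffun c => if c == a then x else if c == b then y else xchoose (A_pt c)].
have /A_homs : f \in box A.
  apply/boxP => c; rewrite ffunE.
  by case: eqP => [->|_]; [|case: eqP => [->|_]; last exact: xchooseP].
rewrite inE => /forallP/(_ a)/forallP/(_ b); rewrite Hab !ffunE eqxx eq_sym.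
by rewrite (negbTE neq_ab) eqxx.
Qed.

Lemma berge_free_sparse_homs (VF VH : finType) (Fadj : rel VF) (Hadj : rel VH)
    (p : VF -> VH) (r q : nat) :
    irreflexive Hadj -> (forall u v, Fadj u v -> Hadj (p u) (p v)) ->
  exists N, forall n, N <= n -> forall E : {set {set 'I_n}},
    uniform r E -> berge_free Fadj E -> q * #|homs Hadj (shadow E)| < n ^ #|VH|.
Proof.
move=> Hirr p_hom; set T := (#|{: {set VF} * VF}| * (#|VF| + r)).+1.
have [N box_in_dense] := erdos_box VH T q.
exists N => n le_Nn E E_uniform E_free; rewrite ltnNge; apply/negP => dense.
have [A A_large A_homs] := box_in_dense n le_Nn _ dense.
apply: (negP E_free).
apply: (berge_copy_of_complete_box (B := A \o p) (T := T) E_uniform) => //.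
- by move=> u; apply: A_large.
- move=> u v x y Fuv; apply: box_homs_complete A_homs (p_hom _ _ Fuv) => // c.
  exact: leq_trans (A_large c).
Qed.

Unset Implicit Arguments.
Local Open Scope ring_scope.

Theorem corollary8 (VF VH : finType) (Fadj : rel VF) (Hadj : rel VH) (r : nat) :
  simple_graph Fadj -> simple_graph Hadj ->
  subgraph_of_blowup Fadj Hadj ->
  (#|VF| <= r)%N ->
  forall eps : rat, 0 < eps ->
    exists N : nat, forall n : nat, (N <= n)%N ->
      (ex_hat r n Hadj Fadj)%:R <= eps * (n%:R) ^+ #|VH|.
Proof.
move=> _ [_ Hirr] [t [psi [_ psi_hom]]] _ eps eps_gt0.
pose q := Num.Def.archi_bound eps^-1.
have eps_q : 1 <= eps * q%:R.
  have : eps^-1 < q%:R by apply: archi_boundP; rewrite invr_ge0 ltW.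
  by rewrite -(ltr_pM2l eps_gt0) mulfV ?gt_eqF // => /ltW.
have q_gt0 : (0 < q)%N by case: (posnP q) eps_q => // ->; rewrite mulr0.
have [N sparse] := berge_free_sparse_homs r q Hirr psi_hom.
exists N => n le_Nn.
have ex_hat_le : (ex_hat r n Hadj Fadj * q <= n ^ #|VH|)%N.
  rewrite -leq_divRL //; apply/bigmax_leqP => E /andP[E_uniform E_free].
  rewrite leq_divRL // mulnC; apply: ltnW.
  apply: leq_ltn_trans (sparse n le_Nn E E_uniform E_free).
  by rewrite leq_mul2l num_copies_le_homs orbT.
have : (ex_hat r n Hadj Fadj)%:R * q%:R <= (n%:R : rat) ^+ #|VH|.
  by rewrite -natrM -natrX ler_nat.
have : 0 <= (ex_hat r n Hadj Fadj)%:R :> rat by [].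
nra.
Qed.
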